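(* Let $h_1,\dots,h_r$ be positive integers with $h_1+\dots+h_r=n$. Then $$\binom{n}{h_1,\dots,h_r}\le \frac{n^n}{h_r^{h_1}\prod_{i=2}^{r}h_{i-1}^{h_i}}.$$
   Context: $\binom{n}{h_1,\dots,h_r}=\frac{n!}{h_1!\cdots h_r!}$ is the multinomial coefficient. *)

From mathcomp Require Import all_boot all_order all_algebra.
Set Implicit Arguments. Unset Strict Implicit. Unset Printing Implicit Defensive.
Import Order.TTheory GRing.Theory Num.Theory.
Local Open Scope ring_scope.

Definition multinom (r : nat) (h : nat -> nat) : rat :=
  ((\sum_(1 <= i < r.+1) h i)%N)`!%:R / (\prod_(1 <= i < r.+1) (h i)`!%:R).

(* The multinomial theorem expands (x_1 + ... + x_r)^n as a sum of nonnegative terms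
   multinom(k) * x_1^k_1 * ... * x_r^k_r, so each term is at most the whole power.
   Taking the term k = h and the weights x_1 = h_r, x_i = h_(i-1) (a cyclic shift
   of h, which still sums to n) gives the bound. *)
From mathcomp Require Import all_boot all_order all_algebra.
From mathcomp Require Import ring.
Import Order.TTheory GRing.Theory Num.Theory.
Local Open Scope ring_scope.

Lemma fact_addn_bin (m k : nat) : ((m + k)`! = 'C(m + k, k) * m`! * k`!)%N.
Proof.
by rewrite -mulnA [(m`! * _)%N]mulnC -{3}(addnK k m) [(m + _)%N]addnC bin_fact ?leq_addr.
Qed.

Lemma multinomial_term_le_exprn (R : numFieldType) (r : nat) (x : nat -> R)
    (k : nat -> nat) :
  (forall i, 0 <= x i) ->
  ((\sum_(1 <= i < r.+1) k i)%N)`!%:R / (\prod_(1 <= i < r.+1) (k i)`!%:R)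
    * \prod_(1 <= i < r.+1) x i ^+ k i
  <= (\sum_(1 <= i < r.+1) x i) ^+ (\sum_(1 <= i < r.+1) k i)%N.
Proof.
move=> x_ge0; elim: r => [|r IH]; first by rewrite !big_geq // divr1 mulr1 expr0.
rewrite !(big_nat_recr r.+1 1) //=.
set K := (\sum_(1 <= i < r.+1) k i)%N; set S := \sum_(1 <= i < r.+1) x i.
set P := \prod_(1 <= i < r.+1) ((k i)`!%:R : R).
set Q := \prod_(1 <= i < r.+1) x i ^+ k i.
have P_gt0 : 0 < P by apply: prodr_gt0 => i _; rewrite ltr0n fact_gt0.
have kf_gt0 : 0 < (k r.+1)`!%:R :> R by rewrite ltr0n fact_gt0.
have -> : (K + k r.+1)`!%:R / (P * (k r.+1)`!%:R) * (Q * x r.+1 ^+ k r.+1)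
    = ('C(K + k r.+1, k r.+1)%:R * x r.+1 ^+ k r.+1) * (K`!%:R / P * Q).
  by rewrite fact_addn_bin !natrM; field; rewrite !gt_eqF.
(* the left-hand side is the term of index [k r.+1] in the binomial expansion of [(S + x r.+1) ^+ _] *)
rewrite exprDn (bigD1 (@Ordinal (K + k r.+1).+1 (k r.+1) (leq_addl K (k r.+1)))) //=.
rewrite addnK -[X in X <= _]addr0; apply: lerD; last first.
  by apply: sumr_ge0 => i _; rewrite mulrn_wge0 // mulr_ge0 // exprn_ge0 // sumr_ge0.
rewrite -[in X in _ <= X]mulr_natl -mulrA ler_wpM2l // mulrC ler_wpM2r //.
exact: exprn_ge0.
Qed.

Definition cyclic_shift (r : nat) (h : nat -> nat) (i : nat) : nat :=
  if i == 1%N then h r else h i.-1.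

Lemma cyclic_shift_ge2 (r : nat) (h : nat -> nat) (i : nat) :
  (2 <= i)%N -> cyclic_shift r h i = h i.-1.
Proof. by rewrite /cyclic_shift; case: eqP => // ->. Qed.

Lemma cyclic_shift_gt0 (r : nat) (h : nat -> nat) :
  (forall i, (1 <= i <= r)%N -> (0 < h i)%N) ->
  forall i, (1 <= i <= r)%N -> (0 < cyclic_shift r h i)%N.
Proof.
move=> h_gt0 i /andP [i_ge1 i_le_r]; rewrite /cyclic_shift.
case: eqP => [_|/eqP i_ne1]; first by rewrite h_gt0 // (leq_trans i_ge1 i_le_r) leqnn.
by apply: h_gt0; case: i i_ge1 i_ne1 i_le_r => [|[|i]] // _ _ /ltnW.
Qed.

Lemma sum_cyclic_shift (r : nat) (h : nat -> nat) :
  (0 < r)%N ->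
  (\sum_(1 <= i < r.+1) cyclic_shift r h i = \sum_(1 <= i < r.+1) h i)%N.
Proof.
case: r => // r _.
rewrite big_ltn // (big_nat_recr r.+1 1) //= {1}/cyclic_shift eqxx addnC.
congr (_ + _)%N; rewrite big_add1 big_nat_cond [RHS]big_nat_cond.
by apply: eq_bigr => i /andP [/andP [i_gt0 _] _]; rewrite cyclic_shift_ge2.
Qed.

Lemma prod_cyclic_shift_expn (R : nzSemiRingType) (r : nat) (h : nat -> nat) :
  (0 < r)%N ->
  \prod_(1 <= i < r.+1) (cyclic_shift r h i)%:R ^+ h i
    = (h r ^ h 1%N)%:R * \prod_(2 <= i < r.+1) ((h i.-1) ^ (h i))%:R :> R.
Proof.
move=> r_gt0; rewrite big_ltn ?ltnS // {1}/cyclic_shift eqxx natrX; congr (_ * _).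
by apply: eq_big_nat => i /andP [i_ge2 _]; rewrite cyclic_shift_ge2 ?natrX.
Qed.

Theorem mainTheorem8 (r n : nat) (h : nat -> nat) :
  (1 <= r)%N ->
  (forall i, (1 <= i <= r)%N -> (0 < h i)%N) ->
  (\sum_(1 <= i < r.+1) h i)%N = n ->
  multinom r h <=
    (n ^ n)%:R / ((h r ^ h 1%N)%:R * \prod_(2 <= i < r.+1) ((h i.-1) ^ (h i))%:R) :> rat.
Proof.
move=> r_gt0 h_gt0 sum_h.
have := @multinomial_term_le_exprn rat r (fun i => (cyclic_shift r h i)%:R) h
  (fun i => ler0n _ _).
rewrite -natr_sum sum_cyclic_shift // prod_cyclic_shift_expn // sum_h -natrX => term_le.
have denom_gt0 : 0 < (h r ^ h 1%N)%:R * \prod_(2 <= i < r.+1) ((h i.-1) ^ (h i))%:R :> rat.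
  rewrite -prod_cyclic_shift_expn // big_nat_cond prodr_gt0 // => i /andP [/andP [i_ge1 i_le] _].
  by rewrite exprn_gt0 // ltr0n cyclic_shift_gt0 // i_ge1.
by rewrite ler_pdivlMr // /multinom sum_h.
Qed.
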